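(* Let $R$ be a ring and $G$ a $p$-group for some prime $p$ such that the group ring $RG$ is a DT ring and $3\in\Delta(R)$. Then either $G$ is a $3$-group or $G$ is an elementary abelian $2$-group ($g^2=1$ for all $g\in G$).
   Context: All rings are associative with identity; $U(R)$ is the group of units. $\Delta(R)=\{x\in R: x+u\in U(R)\text{ for all }u\in U(R)\}$. $\mathrm{Tr}(R)=\{x\in R: x^3=x\}$. A ring $R$ is a DT ring if every $r\in R$ can be written $r=e+d$ with $e\in\mathrm{Tr}(R)$ and $d\in\Delta(R)$. $RG$ denotes the group ring. *)

(* Group rings R[G] for an arbitrary (possibly infinite)
   group G are built as finitely supported functions G -> R (finmap's fsfun). *)
From HB Require Import structures.
From mathcomp Require Import all_boot all_order all_algebra.
From mathcomp Require Import finmap.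
Set Implicit Arguments. Unset Strict Implicit. Unset Printing Implicit Defensive.
Import Order.TTheory GRing.Theory Num.Theory.
Local Open Scope fset_scope.
Local Open Scope ring_scope.

Section RingNotions.
Variables (T : Type) (add mul : T -> T -> T) (one : T).

Definition is_unit_op (u : T) : Prop :=
  exists v : T, mul u v = one /\ mul v u = one.

Definition in_Delta_op (x : T) : Prop :=
  forall u : T, is_unit_op u -> is_unit_op (add x u).

Definition is_tripotent_op (x : T) : Prop := mul x (mul x x) = x.

Definition DT_op : Prop :=
  forall r : T, exists e d : T, is_tripotent_op e /\ in_Delta_op d /\ r = add e d.
End RingNotions.

Definition in_Delta (R : nzRingType) (x : R) : Prop :=
  in_Delta_op +%R *%R 1 x.
Definition DT_ring (R : nzRingType) : Prop := DT_op +%R *%R (1 : R).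

Section GroupRing.
Variables (R : nzRingType) (G : groupType).

Definition grpring := {fsfun G -> R with 0}.

Definition gr_add (a b : grpring) : grpring :=
  [fsfun g in finsupp a `|` finsupp b => a g + b g | 0].

Definition gr_one : grpring := [fsfun g in [fset 1%g] => 1 | 0].

(* (a * b)(g) = sum_{h} a(h) b(h^-1 g); this vanishes outside supp(a)supp(b) *)
Definition gr_mul (a b : grpring) : grpring :=
  [fsfun g in [fset (x * y)%g | x in finsupp a, y in finsupp b] =>
     \sum_(h <- finsupp a) a h * b (h^-1 * g)%g | 0].

Definition DT_grpring : Prop := DT_op gr_add gr_mul gr_one.
End GroupRing.

Definition is_pgroup (p : nat) (G : groupType) : Prop :=
  forall g : G, exists n : nat, (g ^+ (p ^ n))%g = 1%g.

Definition elementary_abelian_2group (G : groupType) : Prop :=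
  (forall g h : G, (g * h)%g = (h * g)%g) /\ (forall g : G, (g ^+ 2)%g = 1%g).

From HB Require Import structures.
From mathcomp Require Import all_boot all_order all_algebra.
From mathcomp Require Import finmap zify.
Set Implicit Arguments. Unset Strict Implicit. Unset Printing Implicit Defensive.
Import Order.TTheory GRing.Theory Num.Theory.
Local Open Scope ring_scope.

(* In a DT ring every unit u = e + d has a unit tripotent part e, so e^2 = 1
   and u^2 - 1 = e d + d u lies in Delta.  For h = u^2 of order N with N a unit,
   s = 1 + h + ... + h^(N-1) is N plus an element of Delta, hence a unit, and
   (h - 1) s = h^N - 1 = 0 forces h = 1.  In RG this is applied to the basis
   element g, with N a power of p: if p <> 3 then p is congruent to +-1 modulo
   3, so 3 in Delta(R) makes p a unit.  Hence g^2 = 1 for all g. *)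

Section DeltaTheory.
Variable T : nzRingType.
Local Notation unit_op := (@is_unit_op T *%R 1).
Local Notation Delta := (@in_Delta_op T +%R *%R 1).

Lemma unit_op1 : unit_op 1.
Proof. by exists 1; rewrite mulr1. Qed.

Lemma unit_opM a b : unit_op a -> unit_op b -> unit_op (a * b).
Proof.
move=> [a' [aa' a'a]] [b' [bb' b'b]]; exists (b' * a'); split.
  by rewrite mulrA -(mulrA a) bb' mulr1 aa'.
by rewrite mulrA -(mulrA b') a'a mulr1 b'b.
Qed.

Lemma unit_opN a : unit_op a -> unit_op (- a).
Proof. by move=> [a' [aa' a'a]]; exists (- a'); rewrite !mulrNN. Qed.

Lemma Delta0 : Delta 0.
Proof. by move=> u; rewrite add0r. Qed.

Lemma DeltaD x y : Delta x -> Delta y -> Delta (x + y).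
Proof. by move=> Dx Dy u Uu; rewrite -addrA; apply/Dx/Dy. Qed.

Lemma DeltaN x : Delta x -> Delta (- x).
Proof. by move=> Dx u /unit_opN /Dx /unit_opN; rewrite opprD opprK. Qed.

Lemma DeltaMn x n : Delta x -> Delta (x *+ n).
Proof.
move=> Dx; elim: n => [|n IHn]; first by rewrite mulr0n; apply: Delta0.
by rewrite mulrS; apply: DeltaD.
Qed.

Lemma Delta_sum n (F : 'I_n -> T) :
  (forall i, Delta (F i)) -> Delta (\sum_(i < n) F i).
Proof. by move=> DF; apply: (big_ind Delta); [apply: Delta0 | apply: DeltaD |]. Qed.

Lemma DeltaMl v x : unit_op v -> Delta x -> Delta (v * x).
Proof.
move=> [v' [vv' v'v]] Dx u Uu.
have -> : v * x + u = v * (x + v' * u) by rewrite mulrDr mulrA vv' mul1r.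
by apply: unit_opM; [exists v' | apply/Dx/unit_opM => //; exists v].
Qed.

Lemma DeltaMr v x : unit_op v -> Delta x -> Delta (x * v).
Proof.
move=> [v' [vv' v'v]] Dx u Uu.
have -> : x * v + u = (x + u * v') * v by rewrite mulrDl -mulrA v'v mulr1.
by apply: unit_opM; [apply/Dx/unit_opM => //; exists v | exists v'].
Qed.

Lemma unit_op_subDelta e d : Delta d -> unit_op (e + d) -> unit_op e.
Proof. by move=> /DeltaN Dd /Dd; rewrite (addrC e) addKr. Qed.

Lemma tripotent_unit_sqr e : e * (e * e) = e -> unit_op e -> e * e = 1.
Proof. by move=> e3 [v [ev ve]]; rewrite -[e * e]mul1r -ve -mulrA e3 ve. Qed.

Lemma DT_unit_sqr_subr1 u :
  DT_op +%R *%R (1 : T) -> unit_op u -> Delta (u * u - 1).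
Proof.
move=> DT_T Uu; have [e [d [e3 [Dd u_ed]]]] := DT_T u; subst u.
have ee1 : e * e = 1 by apply: tripotent_unit_sqr (unit_op_subDelta Dd Uu).
have -> : (e + d) * (e + d) - 1 = e * d + d * (e + d).
  by rewrite mulrDl mulrDr ee1 addrAC (addrAC 1) subrr add0r.
by apply: DeltaD; [apply: DeltaMl; first exists e | apply: DeltaMr].
Qed.

Lemma Delta_expr_subr1 h i :
  unit_op h -> Delta (h - 1) -> Delta (h ^+ i - 1).
Proof.
move=> Uh Dh; elim: i => [|i IHi]; first by rewrite expr0 subrr; apply: Delta0.
have -> : h ^+ i.+1 - 1 = (h ^+ i - 1) * h + (h - 1).
  by rewrite mulrBl mul1r -exprSr addrA subrK.
by apply: DeltaD => //; apply: DeltaMr.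
Qed.

Lemma Delta_subr1_torsion_eq1 h N :
  unit_op h -> Delta (h - 1) -> unit_op N%:R -> h ^+ N = 1 -> h = 1.
Proof.
move=> Uh Dh UN hN1.
set s := \sum_(i < N) h ^+ i.
have Us : unit_op s.
  have -> : s = \sum_(i < N) (h ^+ i - 1) + N%:R.
    by rewrite sumrB sumr_const card_ord subrK.
  have Dsum : Delta (\sum_(i < N) (h ^+ i - 1)).
    by apply: Delta_sum => i; apply: Delta_expr_subr1.
  exact: Dsum _ UN.
have hs0 : (h - 1) * s = 0 by rewrite -subrX1 hN1 subrr.
case: Us => s' [ss' _]; apply/eqP; rewrite -subr_eq0; apply/eqP.
by have := congr1 ( *%R^~ s') hs0; rewrite mul0r -mulrA ss' mulr1.
Qed.

Lemma DT_unit_sqr_torsion_eq1 u N : DT_op +%R *%R (1 : T) ->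
  unit_op u -> unit_op N%:R -> (u * u) ^+ N = 1 -> u * u = 1.
Proof.
move=> DT_T Uu; apply: Delta_subr1_torsion_eq1; first exact: unit_opM.
exact: DT_unit_sqr_subr1.
Qed.

Lemma Delta3_natr_unit n : Delta 3%:R -> ~~ (3 %| n)%N -> unit_op n%:R.
Proof.
move=> D3; rewrite /dvdn {2}(divn_eq n 3%N).
have : (n %% 3 < 3)%N by rewrite ltn_mod.
case: (n %% 3)%N => [|[|[|//]]] // _ _.
- by rewrite natrD natrM mulr_natl; apply: (DeltaMn _ D3 unit_op1).
- have -> : ((n %/ 3) * 3 + 2 = (n %/ 3).+1 * 3 - 1)%N by lia.
  rewrite natrB ?natrM ?mulr_natl; last by lia.
  exact/(DeltaMn _ D3)/unit_opN/unit_op1.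
Qed.

End DeltaTheory.

Section GroupRingStructure.
Local Open Scope fset_scope.
Local Open Scope ring_scope.
Variables (R : nzRingType) (G : groupType).
Local Notation RG := (grpring R G).

Lemma grpring_fsfunE (S : {fset G}) (F : G -> R) x :
  ([fsfun g in S => F g | 0] : RG) x = if x \in S then F x else 0.
Proof. by rewrite fsfun_fun. Qed.

Lemma finsupp_grpring_fsfun (S : {fset G}) (F : G -> R) :
  finsupp ([fsfun g in S => F g | 0] : RG) `<=` S.
Proof.
apply/fsubsetP => x; rewrite mem_finsupp grpring_fsfunE.
by case: ifP => //; rewrite eqxx.
Qed.

Lemma gr_addE (a b : RG) x : gr_add a b x = a x + b x.
Proof.
rewrite grpring_fsfunE in_fsetU; case: ifP => // /negbT.
by rewrite negb_or => /andP[aNx bNx]; rewrite !fsfun_dflt // addr0.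
Qed.

Lemma gr_oneE x : gr_one R G x = (x == 1%g)%:R.
Proof. by rewrite grpring_fsfunE in_fset1; case: eqP. Qed.

Lemma gr_mul_supp (a b : RG) :
  finsupp (gr_mul a b) `<=` [fset (x * y)%g | x in finsupp a, y in finsupp b].
Proof. exact: finsupp_grpring_fsfun. Qed.

Lemma gr_mulE_supp (S : {fset G}) (a b : RG) x : finsupp a `<=` S ->
  gr_mul a b x = \sum_(h <- S) a h * b (h^-1 * x)%g.
Proof.
move=> aS; have sumE : \sum_(h <- finsupp a) a h * b (h^-1 * x)%g
                      = \sum_(h <- S) a h * b (h^-1 * x)%g.
  by apply: big_fset_incl aS _ => h _ aNh; rewrite fsfun_dflt // mul0r.
rewrite grpring_fsfunE -sumE; case: ifP => // /negbT xNab.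
rewrite big_seq big1 // => h ah; case: (finsuppP b (h^-1 * x)%g) => [|bhx].
  by rewrite mulr0.
case/negP: xNab; apply/imfset2P; exists h => //; exists (h^-1 * x)%g => //.
by rewrite mulVKg.
Qed.

Lemma gr_mulE (a b : RG) x :
  gr_mul a b x = \sum_(h <- finsupp a) a h * b (h^-1 * x)%g.
Proof. exact: gr_mulE_supp. Qed.

Lemma big_fset_lmulg (h : G) (B S : {fset G}) (F : G -> R) :
  (forall j, j \in B -> (h * j)%g \in S) ->
  (forall k, k \in S -> (h^-1 * k)%g \notin B -> F k = 0) ->
  \sum_(j <- B) F (h * j)%g = \sum_(k <- S) F k.
Proof.
move=> hBS F0; have inj_hM : {in B &, injective (fun j => (h * j)%g)} by move=> x y _ _ /mulgI.
rewrite -(@big_imfset _ _ _ _ _ imfset_key _ _ F inj_hM) /=; apply: big_fset_incl.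
  by apply/fsubsetP => k /imfsetP [j /= jB ->]; apply: hBS.
move=> k kS kNim; apply: F0 => //; apply: contra kNim => hkB.
by apply/imfsetP; exists (h^-1 * k)%g => //; rewrite mulVKg.
Qed.

Lemma gr_mulA : associative (@gr_mul R G).
Proof.
move=> a b c; apply/fsfunP => x.
rewrite (gr_mulE_supp _ _ (gr_mul_supp a b)) gr_mulE.
set S := [fset (_ * _)%g | _ in _, _ in _].
under [RHS]eq_bigr => k _ do rewrite gr_mulE mulr_suml.
rewrite exchange_big /= big_seq [RHS]big_seq; apply: eq_bigr => h ah.
rewrite gr_mulE mulr_sumr.
under [RHS]eq_bigr => k _ do rewrite -mulrA.
rewrite -[in RHS]mulr_sumr -mulr_sumr; congr (_ * _).
rewrite -(@big_fset_lmulg h (finsupp b) S (fun k => b (h^-1 * k)%g * c (k^-1 * x)%g)).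
- by apply: eq_bigr => j _; rewrite mulKg invgM mulgA.
- by move=> j bj; apply/imfset2P; exists h => //; exists j.
- by move=> k _ bNk; rewrite fsfun_dflt // mul0r.
Qed.

Definition gr_zero : RG := [fsfun g in fset0 => (0 : R) | 0].
Definition gr_opp (a : RG) : RG := [fsfun g in finsupp a => - a g | 0].

Lemma gr_zeroE x : gr_zero x = 0.
Proof. by rewrite fsfun_fun in_fset0. Qed.

Lemma gr_oppE (a : RG) x : gr_opp a x = - a x.
Proof.
rewrite grpring_fsfunE; case: ifP => // /negbT aNx.
by rewrite fsfun_dflt // oppr0.
Qed.

Lemma gr_addA : associative (@gr_add R G).
Proof. by move=> a b c; apply/fsfunP => x; rewrite !gr_addE addrA. Qed.

Lemma gr_addC : commutative (@gr_add R G).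
Proof. by move=> a b; apply/fsfunP => x; rewrite !gr_addE addrC. Qed.

Lemma gr_add0 : left_id gr_zero (@gr_add R G).
Proof. by move=> a; apply/fsfunP => x; rewrite gr_addE gr_zeroE add0r. Qed.

Lemma gr_addN : left_inverse gr_zero gr_opp (@gr_add R G).
Proof. by move=> a; apply/fsfunP => x; rewrite gr_addE gr_zeroE gr_oppE addNr. Qed.

Lemma gr_mul1 : left_id (gr_one R G) (@gr_mul R G).
Proof.
move=> a; apply/fsfunP => x.
rewrite (gr_mulE_supp _ _ (finsupp_grpring_fsfun _ _)) big_seq_fset1.
by rewrite gr_oneE eqxx mul1r invg1 mul1g.
Qed.

Lemma gr_mulr1 : right_id (gr_one R G) (@gr_mul R G).
Proof.
move=> a; apply/fsfunP => x.
rewrite (gr_mulE_supp _ _ (fsubsetUr [fset x] (finsupp a))).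
rewrite (big_fsetD1 x) ?in_fsetU ?in_fset1 ?eqxx //= gr_oneE mulVg eqxx mulr1.
rewrite big_seq big1 ?addr0 // => h; rewrite !inE => /andP [hNx _].
by rewrite gr_oneE mulg_eq1 eqg_inv (negbTE hNx) mulr0.
Qed.

Lemma gr_mulDr : right_distributive (@gr_mul R G) (@gr_add R G).
Proof.
move=> a b c; apply/fsfunP => x; rewrite gr_addE !gr_mulE -big_split /=.
by apply: eq_bigr => h _; rewrite gr_addE mulrDr.
Qed.

Lemma gr_mulDl : left_distributive (@gr_mul R G) (@gr_add R G).
Proof.
move=> a b c; apply/fsfunP => x.
rewrite gr_addE (gr_mulE_supp _ _ (finsupp_grpring_fsfun _ _)).
rewrite (gr_mulE_supp _ _ (fsubsetUl (finsupp a) (finsupp b))).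
rewrite (gr_mulE_supp _ _ (fsubsetUr (finsupp a) (finsupp b))) -big_split /=.
by apply: eq_bigr => h _; rewrite gr_addE mulrDl.
Qed.

Lemma gr_one_neq0 : gr_one R G != gr_zero.
Proof.
apply/eqP => /fsfunP /(_ 1%g); rewrite gr_oneE gr_zeroE eqxx.
by apply/eqP; rewrite oner_eq0.
Qed.

Definition grpring_ring := grpring R G.
HB.instance Definition _ := Choice.copy grpring_ring (grpring R G).
HB.instance Definition _ := GRing.isZmodule.Build grpring_ring
  gr_addA gr_addC gr_add0 gr_addN.
HB.instance Definition _ := GRing.Zmodule_isNzRing.Build grpring_ring
  gr_mulA gr_mul1 gr_mulr1 gr_mulDl gr_mulDr gr_one_neq0.

End GroupRingStructure.

Section GroupRingEmbeddings.
Local Open Scope fset_scope.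
Local Open Scope ring_scope.
Variables (R : nzRingType) (G : groupType).
Local Notation RG := (grpring_ring R G).
Local Notation unit_op := (@is_unit_op _ *%R 1).

Definition gr_basis (g : G) : RG := [fsfun x in [fset g] => (1 : R) | 0].
Definition gr_const (r : R) : RG := [fsfun x in [fset 1%g] => r | 0].

Lemma gr_basisE g x : gr_basis g x = (x == g)%:R.
Proof. by rewrite grpring_fsfunE in_fset1; case: eqP. Qed.

Lemma gr_constE r x : gr_const r x = if x == 1%g then r else 0.
Proof. by rewrite grpring_fsfunE in_fset1. Qed.

Lemma gr_basisM a b : gr_basis a * gr_basis b = gr_basis (a * b)%g.
Proof.
apply/fsfunP => x; rewrite [LHS](gr_mulE_supp _ _ (finsupp_grpring_fsfun _ _)).
rewrite big_seq_fset1 !gr_basisE eqxx mul1r.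
by congr (_%:R); rewrite -(inj_eq (mulgI a)) mulVKg.
Qed.

Lemma gr_basis_inj : injective gr_basis.
Proof.
move=> a b /fsfunP /(_ a); rewrite !gr_basisE eqxx.
by case: eqP => // _ /eqP; rewrite mulr1n mulr0n oner_eq0.
Qed.

Lemma gr_basis_unit g : unit_op (gr_basis g).
Proof. by exists (gr_basis g^-1); rewrite !gr_basisM mulgV mulVg. Qed.

Lemma gr_basisX g n : gr_basis g ^+ n = gr_basis (g ^+ n)%g.
Proof.
elim: n => [|n IHn]; first by rewrite expr0 expg0.
by rewrite exprS IHn gr_basisM expgS.
Qed.

Lemma gr_constM a b : gr_const a * gr_const b = gr_const (a * b).
Proof.
apply/fsfunP => x; rewrite [LHS](gr_mulE_supp _ _ (finsupp_grpring_fsfun _ _)).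
by rewrite big_seq_fset1 !gr_constE eqxx invg1 mul1g; case: ifP; rewrite ?mulr0.
Qed.

Lemma gr_const_natr n : gr_const n%:R = n%:R.
Proof.
elim: n => [|n IHn]; apply/fsfunP => x.
  by rewrite gr_constE gr_zeroE if_same.
by rewrite !mulrS gr_addE -IHn !gr_constE; case: ifP; rewrite ?addr0.
Qed.

Lemma gr_const_unit r : @is_unit_op R *%R 1 r -> unit_op (gr_const r).
Proof. by case=> v [rv vr]; exists (gr_const v); rewrite !gr_constM rv vr. Qed.

Lemma DT_grpring_sqr_torsion_eq1 (g : G) N : DT_grpring R G ->
  @is_unit_op R *%R 1 N%:R -> ((g * g) ^+ N = 1)%g -> (g * g = 1)%g.
Proof.
move=> DT_RG /gr_const_unit; rewrite gr_const_natr => UN ggN1.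
apply: gr_basis_inj; rewrite -gr_basisM [gr_basis 1]/(1 : RG).
apply: (@DT_unit_sqr_torsion_eq1 RG _ _ DT_RG (gr_basis_unit g) UN).
by rewrite gr_basisM gr_basisX ggN1.
Qed.

End GroupRingEmbeddings.

Lemma elementary_abelian_2group_of_sqr1 (G : groupType) :
  (forall g : G, (g * g = 1)%g) -> elementary_abelian_2group G.
Proof.
move=> sqr1; have invgg (x : G) : (x^-1 = x)%g by apply: mulg1_eq.
split=> [g h|g]; last by rewrite expg2.
by rewrite -[(g * h)%g]invgg invgM !invgg.
Qed.

Theorem theorem3p11 (R : nzRingType) (G : groupType) (p : nat) :
  prime p -> is_pgroup p G ->
  DT_grpring R G -> in_Delta (3%:R : R) ->
  is_pgroup 3 G \/ elementary_abelian_2group G.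
Proof.
move=> p_pr pG DT_RG D3.
have [p3 | p_neq3] := eqVneq p 3%N; [by left; rewrite -p3 | right].
apply: elementary_abelian_2group_of_sqr1 => g.
have [k ggk] := pG (g * g)%g.
apply: (DT_grpring_sqr_torsion_eq1 DT_RG _ ggk).
apply: Delta3_natr_unit D3 _.
by rewrite Euclid_dvdX // dvdn_prime2 // eq_sym (negbTE p_neq3).
Qed.
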